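(* Let $r,p\ge0$ be integers and $a_{-r},\dots,a_p$ real coefficients whose symbol $\gamma(\xi)=\sum_{k=-r}^{p}a_ke^{ik\xi}$ satisfies $|\gamma(\xi)|\le1$ for all $\xi\in\mathbb R$, and such that $\sum_{k=-r}^pa_k=1$ and $\sum_{k=-r}^p k a_k=-\lambda$ for some $\lambda>0$. Then $|a_0|<1$. *)

From Stdlib Require Import Reals ZArith.
From Coquelicot Require Import Coquelicot.
Open Scope R_scope.

Definition zsum (r p : nat) (f : Z -> R) : R :=
  sum_f_R0 (fun j => f (Z.of_nat j - Z.of_nat r)%Z) (r + p).

(* The symbol gamma(xi) = sum_{k=-r}^{p} a_k e^{i k xi}, as a complex number
   (real part, imaginary part), using e^{i t} = cos t + i sin t. *)
Definition symbol (r p : nat) (a : Z -> R) (xi : R) : C :=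
  (zsum r p (fun k => a k * cos (IZR k * xi)),
   zsum r p (fun k => a k * sin (IZR k * xi))).

From Stdlib Require Import Reals ZArith Lra Lia.
From Coquelicot Require Import Coquelicot.
Open Scope R_scope.

(* Suppose |a_0| >= 1. For 0 < |k| <= r + p the sum of cos (k x) over the r + p + 1 points
   x = t + 2 pi j / (r + p + 1) vanishes, so the sum of Re gamma over these points is
   (r + p + 1) a_0. As |Re gamma| <= 1 everywhere, this forces |Re gamma (t)| >= 1, hence
   Im gamma (t) = 0, for every t. Differentiating Im gamma at 0 gives sum_k k a_k = 0,
   contradicting lambda > 0. *)

Lemma sin_add_2IZR_PI (x : R) (k : Z) : sin (x + 2 * IZR k * PI) = sin x.
Proof.
  assert (Hsin : sin (2 * IZR k * PI) = 0).
  { apply sin_eq_0_1; exists (2 * k)%Z; rewrite mult_IZR; ring. }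
  assert (Hcos : cos (2 * IZR k * PI) = 1).
  { replace (2 * IZR k * PI) with (2 * (IZR k * PI)) by ring.
    rewrite cos_2a_sin, sin_eq_0_1; [ring | now exists k]. }
  rewrite sin_plus, Hsin, Hcos; ring.
Qed.

Lemma sum_cos_arith_mul_sin (th ph : R) (n : nat) :
  2 * sin (ph / 2) * sum_f_R0 (fun j => cos (th + INR j * ph)) n =
  sin (th + (INR n + 1 / 2) * ph) - sin (th - ph / 2).
Proof.
  induction n as [|n IH].
  - simpl; replace (th + 0 * ph) with th by ring.
    replace (th + (0 + 1 / 2) * ph) with (th + ph / 2) by field.
    rewrite sin_plus, sin_minus; ring.
  - rewrite tech5, Rmult_plus_distr_l, IH, S_INR.
    set (u := th + (INR n + 1) * ph).
    replace (th + (INR n + 1 / 2) * ph) with (u - ph / 2) by (unfold u; field).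
    replace (th + (INR n + 1 + 1 / 2) * ph) with (u + ph / 2) by (unfold u; field).
    rewrite sin_plus, sin_minus; ring.
Qed.

Lemma sin_PI_mul_ratio_neq_0 (k : Z) (N : nat) :
  k <> 0%Z -> (Z.abs k < Z.of_nat N)%Z -> sin (PI * (IZR k / INR N)) <> 0.
Proof.
  intros Hk HkN Hsin.
  assert (HN : 0 < INR N) by (apply lt_0_INR; lia).
  destruct (sin_eq_0_0 _ Hsin) as [m Hm].
  assert (Hkm : IZR k = IZR (m * Z.of_nat N)).
  { rewrite mult_IZR, <- INR_IZR_INZ.
    apply (Rmult_eq_reg_l PI); [|apply PI_neq0].
    replace (PI * (IZR m * INR N)) with ((IZR m * PI) * INR N) by ring.
    rewrite <- Hm; field; lra. }
  apply eq_IZR in Hkm; subst k.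
  destruct (Z.eq_dec m 0) as [->|Hm0]; [lia|].
  nia.
Qed.

Definition equispaced (n : nat) (t : R) (j : nat) : R := 2 * PI * INR j / INR (S n) + t.

Lemma sum_cos_equispaced (n : nat) (k : Z) (t : R) :
  k <> 0%Z -> (Z.abs k <= Z.of_nat n)%Z ->
  sum_f_R0 (fun j => cos (IZR k * equispaced n t j)) n = 0.
Proof.
  intros Hk Hkn.
  assert (HN : 0 < INR (S n)) by (apply lt_0_INR; lia).
  set (ph := 2 * PI * IZR k / INR (S n)).
  assert (Hsin : sin (ph / 2) <> 0).
  { replace (ph / 2) with (PI * (IZR k / INR (S n))) by (unfold ph; field; lra).
    apply sin_PI_mul_ratio_neq_0; lia. }
  rewrite (sum_eq _ (fun j => cos (IZR k * t + INR j * ph)))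
    by (intros j _; unfold equispaced, ph; f_equal; field; lra).
  apply (Rmult_eq_reg_l (2 * sin (ph / 2))); [|lra].
  rewrite sum_cos_arith_mul_sin, Rmult_0_r.
  replace (IZR k * t + (INR n + 1 / 2) * ph) with (IZR k * t - ph / 2 + 2 * IZR k * PI)
    by (unfold ph; rewrite S_INR in *; field; lra).
  rewrite sin_add_2IZR_PI; ring.
Qed.

Lemma sum_f_R0_swap (F : nat -> nat -> R) (n m : nat) :
  sum_f_R0 (fun j => sum_f_R0 (F j) m) n = sum_f_R0 (fun i => sum_f_R0 (fun j => F j i) n) m.
Proof.
  induction n as [|n IH]; simpl; [reflexivity|].
  rewrite IH, <- sum_plus; reflexivity.
Qed.

Lemma sum_f_R0_indicator (c : R) (i n : nat) :
  (i <= n)%nat -> sum_f_R0 (fun j => if Nat.eqb j i then c else 0) n = c.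
Proof.
  induction n as [|n IH]; intros Hi.
  - replace i with 0%nat by lia; reflexivity.
  - rewrite tech5. destruct (Nat.eqb_spec (S n) i) as [<-|Hne].
    + rewrite sum_eq_R0; [ring|]. intros j Hj. destruct (Nat.eqb_spec j (S n)); [lia|auto].
    + rewrite IH by lia; ring.
Qed.

Lemma Rabs_sum_f_R0_le_head (f : nat -> R) (n : nat) :
  (forall j, Rabs (f j) <= 1) -> Rabs (sum_f_R0 f n) <= Rabs (f 0%nat) + INR n.
Proof.
  intros Hf; induction n as [|n IH]; simpl sum_f_R0.
  - simpl; lra.
  - rewrite S_INR. eapply Rle_trans; [apply Rabs_triang|]. specialize (Hf (S n)). lra.
Qed.

Lemma Re_symbol_equispaced_sum (r p : nat) (a : Z -> R) (t : R) :
  sum_f_R0 (fun j => Re (symbol r p a (equispaced (r + p) t j))) (r + p) =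
  INR (S (r + p)) * a 0%Z.
Proof.
  unfold symbol, zsum; simpl Re.
  rewrite sum_f_R0_swap.
  rewrite <- (sum_f_R0_indicator (INR (S (r + p)) * a 0%Z) r (r + p)) by lia.
  apply sum_eq; intros i Hi.
  set (k := (Z.of_nat i - Z.of_nat r)%Z).
  rewrite (sum_eq _ (fun j => cos (IZR k * equispaced (r + p) t j) * a k)) by (intros; ring).
  rewrite <- scal_sum.
  destruct (Nat.eqb_spec i r) as [->|Hne].
  - replace k with 0%Z by (unfold k; lia).
    rewrite (sum_eq _ (fun _ => 1)) by (intros; rewrite Rmult_0_l; apply cos_0).
    rewrite sum_cte; ring.
  - rewrite sum_cos_equispaced by (unfold k; lia); ring.
Qed.

Lemma Re_sq_add_Im_sq_le_1 (z : C) : Cmod z <= 1 -> Re z ^ 2 + Im z ^ 2 <= 1.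
Proof.
  intros Hz; rewrite <- Cmod2_alt.
  pose proof (Cmod_ge_0 z); nra.
Qed.

Lemma Im_symbol_eq_0 (r p : nat) (a : Z -> R) :
  (forall xi, Cmod (symbol r p a xi) <= 1) -> 1 <= Rabs (a 0%Z) ->
  forall t, Im (symbol r p a t) = 0.
Proof.
  intros Hsym Ha0 t.
  assert (Hre : forall x, Rabs (Re (symbol r p a x)) <= 1).
  { intros x; pose proof (Re_sq_add_Im_sq_le_1 _ (Hsym x)).
    apply Rabs_le; nra. }
  pose proof (Rabs_sum_f_R0_le_head (fun j => Re (symbol r p a (equispaced (r + p) t j)))
                (r + p) (fun j => Hre _)) as Hhead.
  rewrite Re_symbol_equispaced_sum, Rabs_mult, Rabs_pos_eq, S_INR in Hhead by apply pos_INR.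
  replace (equispaced (r + p) t 0) with t in Hhead
    by (unfold equispaced; change (INR 0) with 0; unfold Rdiv; ring).
  assert (Hre_t : 1 <= Rabs (Re (symbol r p a t))) by (pose proof (pos_INR (r + p)); nra).
  pose proof (Re_sq_add_Im_sq_le_1 _ (Hsym t)).
  rewrite <- Rabs_R1 in Hre_t; apply Rsqr_le_abs_1 in Hre_t; unfold Rsqr in Hre_t.
  nra.
Qed.

Lemma is_derive_sum_f_R0 (f : nat -> R -> R) (f' : nat -> R) (x : R) (n : nat) :
  (forall j, is_derive (f j) x (f' j)) ->
  is_derive (fun y => sum_f_R0 (fun j => f j y) n) x (sum_f_R0 f' n).
Proof.
  intros Hf; induction n as [|n IH]; simpl; [apply Hf|].
  apply (is_derive_plus (fun y => sum_f_R0 (fun j => f j y) n) (f (S n))); auto.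
Qed.

Lemma is_derive_Im_symbol_0 (r p : nat) (a : Z -> R) :
  is_derive (fun xi => Im (symbol r p a xi)) 0 (zsum r p (fun k => IZR k * a k)).
Proof.
  unfold symbol, zsum; simpl Im.
  apply (is_derive_sum_f_R0 (fun j xi => a (Z.of_nat j - Z.of_nat r)%Z *
                                        sin (IZR (Z.of_nat j - Z.of_nat r) * xi))).
  intros j; auto_derive; auto.
  rewrite Rmult_0_r, cos_0; ring.
Qed.

Theorem lemma3p7 (r p : nat) (a : Z -> R) (lambda : R)
  (Hsym : forall xi : R, Cmod (symbol r p a xi) <= 1)
  (Hsum : zsum r p a = 1)
  (Hmom : zsum r p (fun k => IZR k * a k) = - lambda)
  (Hlam : 0 < lambda) :
  Rabs (a 0%Z) < 1.
Proof.
  apply Rnot_le_lt; intros Ha0.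
  assert (Hderiv0 : is_derive (fun xi => Im (symbol r p a xi)) 0 0).
  { apply (is_derive_ext (fun _ => 0)).
    - intros xi; symmetry; apply (Im_symbol_eq_0 r p a Hsym Ha0).
    - auto_derive; auto. }
  pose proof (is_derive_unique _ _ _ (is_derive_Im_symbol_0 r p a)) as Hmom'.
  rewrite (is_derive_unique _ _ _ Hderiv0), Hmom in Hmom'.
  lra.
Qed.
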